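(* Let $(X_1,Y_1),\dots,(X_{n+m},Y_{n+m})$ be exchangeable random elements of $\mathcal{X}\times\mathcal{Y}$ (indices $1,\dots,n$ calibration, $n+1,\dots,n+m$ test), $f$ a fixed model, $\mathcal{L}(f,x,y)\in[0,1]$ a known risk map, $s:\mathcal{X}\to[0,1]$ a fixed score, and $L_i=\mathcal{L}(f,X_i,Y_i)$. Then for any fixed $\gamma>0$ and every $j\in\{1,\dots,m\}$, the random variable $E_{\gamma,n+j}$ defined below satisfies $E_{\gamma,n+j}\ge0$ and $\mathbb{E}[L_{n+j}E_{\gamma,n+j}]\le1$.
   Context: Let $\mathcal{M}=\{s(X_i)\}_{i=1}^{n+m}$. For $t\in\mathbb{R}$ and $\ell\in[0,1]$ define $$\mathrm{FR}_{n+j}(t;\ell)=\frac{\ell\mathbf{1}\{s(X_{n+j})\le t\}+\sum_{i=1}^nL_i\mathbf{1}\{s(X_i)\le t\}}{1+\sum_{k\ne j,k\le m}\mathbf{1}\{s(X_{n+k})\le t\}}\cdot\frac{m}{n+1},$$ $t_{\gamma,n+j}(\ell)=\max\{t\in\mathcal{M}:\mathrm{FR}_{n+j}(t;\ell)\le\gamma\}$ (with $\max\emptyset=-\infty$), and $$E_{\gamma,n+j}=\inf_{\ell\in[0,1]}\frac{(n+1)\mathbf{1}\{s(X_{n+j})\le t_{\gamma,n+j}(\ell)\}}{\ell\mathbf{1}\{s(X_{n+j})\le t_{\gamma,n+j}(\ell)\}+\sum_{i=1}^nL_i\mathbf{1}\{s(X_i)\le t_{\gamma,n+j}(\ell)\}},$$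 each ratio being $0$ when its numerator is $0$ and $+\infty$ when the numerator is positive and denominator $0$; and $E_{\gamma,n+j}=0$ if $\inf_{\ell}t_{\gamma,n+j}(\ell)=-\infty$. *)

From HB Require Import structures.
From mathcomp Require Import all_boot all_order all_algebra.
From mathcomp Require Import all_classical all_reals all_analysis.
Set Implicit Arguments. Unset Strict Implicit. Unset Printing Implicit Defensive.
Import Order.TTheory GRing.Theory Num.Theory.
Local Open Scope ring_scope.
Local Open Scope classical_set_scope.

(* Exchangeability of a finite family of random elements Z_0..Z_(N-1) with
   values in a measurable space T: for every permutation sigma of the indices
   the joint law of (Z_(sigma i))_i equals that of (Z_i)_i; checked on the
   measurable rectangles prod_i A_i, which generate the product sigma-algebra
   of T^N (a pi-system), so this is equivalent to equality of joint laws. *)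
Definition exchangeable {R : realType} {d dT : measure_display}
  {Omega : measurableType d} {T : measurableType dT} {N : nat}
  (P : probability Omega R) (Z : 'I_N -> Omega -> T) : Prop :=
  forall (sigma : 'I_N -> 'I_N), bijective sigma ->
  forall (A : 'I_N -> set T), (forall i, measurable (A i)) ->
    P [set w | forall i, A i (Z (sigma i) w)] = P [set w | forall i, A i (Z i w)].

Section Evalue.
Variables (R : realType) (n m : nat).
(* S k = s(X_(k+1)) for k : 'I_(n+m); Lc k = L_(k+1) (only calibration used).
   Calibration index i : 'I_n is lshift m i, test index j : 'I_m is rshift n j. *)
Variables (S Lc : 'I_(n + m) -> R) (gamma : R) (j : 'I_m).

Definition ind (b : bool) : R := if b then 1 else 0.

Definition FR (t l : R) : R :=
  (l * ind (S (rshift n j) <= t)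
     + \sum_(i < n) Lc (lshift m i) * ind (S (lshift m i) <= t))
  / (1 + \sum_(k < m | k != j) ind (S (rshift n k) <= t))
  * (m%:R / (n + 1)%:R).

Definition tgam (l : R) : \bar R :=
  \big[Order.max/-oo%E]_(k < n + m | FR (S k) l <= gamma) (S k)%:E.

(* the ratio inside the infimum, with conventions 0/.. = 0, pos/0 = +oo *)
Definition Eratio (l : R) : \bar R :=
  let t := tgam l in
  if ((S (rshift n j))%:E <= t)%E then
    let den := l * 1 + \sum_(i < n) Lc (lshift m i) * ind ((S (lshift m i))%:E <= t)%E in
    if den == 0 then +oo%E else (((n + 1)%:R * 1) / den)%:E
  else 0%E.

Definition Egam : \bar R :=
  if ereal_inf [set tgam l | l in `[0, 1]] == -oo%E then 0%E
  else ereal_inf [set Eratio l | l in `[0, 1]].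

End Evalue.

From HB Require Import structures.
From mathcomp Require Import all_boot all_order all_algebra all_fingroup.
From mathcomp Require Import all_classical all_reals all_analysis measurable_realfun.
Import Order.TTheory GRing.Theory Num.Theory.
Local Open Scope ring_scope.
Local Open Scope classical_set_scope.

(* Write p for the test index n+j and Q for p together with the calibration
   indices. Taking l = L_p in the infimum gives L_p E <= (n+1) h_p, where
   h_q = L_q 1{s(X_q) <= t} / sum_(k in Q) L_k 1{s(X_k) <= t} and
   t = t_{gamma,n+j}(L_p). For l = L_p the ratio FR treats all points of Q
   alike, so the weights h_q are computed from the data by a rule that commutes
   with permutations of Q. By exchangeability they all have the same
   expectation, and since they sum to at most 1 that expectation is at most
   1/(n+1). *)

Section Weights.
Context {R : realType} {n m : nat} (j : 'I_m) (gamma : R).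
Local Notation N := (n + m)%N.
Local Notation p := (rshift n j).

Definition calib_or_test (k : 'I_N) : bool := (k == p) || (k < n)%N.

Lemma calib_or_test_lshift i : calib_or_test (lshift m i).
Proof. by rewrite /calib_or_test /= ltn_ord orbT. Qed.

Lemma calib_or_test_rshift i : calib_or_test (rshift n i) = (i == j).
Proof. by rewrite /calib_or_test (inj_eq (@rshift_inj n m)) /= ltnNge leq_addr orbF. Qed.

Lemma big_calib_or_test (V : Type) (idx : V) (op : Monoid.com_law idx) (F : 'I_N -> V) :
  \big[op/idx]_(k | calib_or_test k) F k = op (F p) (\big[op/idx]_(i < n) F (lshift m i)).
Proof.
rewrite big_mkcond big_split_ord /= Monoid.mulmC; congr (op _ _).
  under eq_bigr do rewrite calib_or_test_rshift.
  by rewrite -big_mkcond big_pred1_eq.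
by apply: eq_bigr => i _; rewrite calib_or_test_lshift.
Qed.

Lemma big_not_calib_or_test (V : Type) (idx : V) (op : Monoid.law idx) (F : 'I_N -> V) :
  \big[op/idx]_(k | ~~ calib_or_test k) F k =
  \big[op/idx]_(k < m | k != j) F (rshift n k).
Proof.
rewrite big_mkcond big_split_ord /= big1 ?Monoid.mul1m; last first.
  by move=> i _; rewrite calib_or_test_lshift.
by rewrite [RHS]big_mkcond; apply: eq_bigr => i _; rewrite calib_or_test_rshift.
Qed.

(* With l = b p the test point enters FR exactly like a calibration point. *)
Lemma FR_symmetric (a b : 'I_N -> R) t :
  FR a b j t (b p) =
  (\sum_(k | calib_or_test k) b k * ind R (a k <= t)) /
  (1 + \sum_(k | ~~ calib_or_test k) ind R (a k <= t)) * (m%:R / (n + 1)%:R).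
Proof. by rewrite big_calib_or_test big_not_calib_or_test. Qed.

Definition selected (a b : 'I_N -> R) (q : 'I_N) : bool :=
  [exists k, (FR a b j (a k) (b p) <= gamma) && (a q <= a k)].

Definition selected_mass (a b : 'I_N -> R) : R :=
  \sum_(k | calib_or_test k) b k * ind R (selected a b k).

Definition weight (a b : 'I_N -> R) (q : 'I_N) : R :=
  b q * ind R (selected a b q) / selected_mass a b.

Lemma ind_ge0 (c : bool) : 0 <= ind R c.
Proof. by case: c; rewrite /ind. Qed.

Lemma weight_ge0 (a b : 'I_N -> R) q : (forall k, 0 <= b k) -> 0 <= weight a b q.
Proof.
move=> b_ge0; rewrite /weight divr_ge0 ?mulr_ge0 ?ind_ge0 //.
by apply: sumr_ge0 => k _; rewrite mulr_ge0 ?ind_ge0.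
Qed.

Lemma sum_weight_le1 (a b : 'I_N -> R) :
  \sum_(k | calib_or_test k) weight a b k <= 1.
Proof.
rewrite -mulr_suml -/(selected_mass a b).
by have [->|/mulfV->] := eqVneq (selected_mass a b) 0; rewrite ?mulr0.
Qed.

Section Permutation.
Variable sg : {perm 'I_N}.
Hypothesis sg_calib_or_test : forall k, calib_or_test (sg k) = calib_or_test k.

Lemma sum_perm (F : 'I_N -> R) (P : pred 'I_N) : (forall k, P (sg k) = P k) ->
  \sum_(k | P k) F (sg k) = \sum_(k | P k) F k.
Proof. by move=> sgP; rewrite [RHS](reindex_inj (@perm_inj _ sg)); apply: eq_bigl. Qed.

Lemma FR_perm (a b : 'I_N -> R) t :
  FR (a \o sg) (b \o sg) j t (b (sg p)) = FR a b j t (b p).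
Proof.
rewrite !FR_symmetric /= (sum_perm (fun k => b k * ind R (a k <= t))) //.
by rewrite (sum_perm (fun k => ind R (a k <= t))) // => k; rewrite sg_calib_or_test.
Qed.

Lemma selected_perm (a b : 'I_N -> R) q :
  selected (a \o sg) (b \o sg) q = selected a b (sg q).
Proof.
rewrite /selected; apply/existsP/existsP => -[k].
  by rewrite FR_perm; exists (sg k).
by exists (sg^-1 k)%g; rewrite /= permKV FR_perm.
Qed.

Lemma weight_perm (a b : 'I_N -> R) q :
  weight (a \o sg) (b \o sg) q = weight a b (sg q).
Proof.
rewrite /weight /selected_mass selected_perm; congr (_ / _).
under eq_bigr do rewrite selected_perm.
exact: (sum_perm (fun k => b k * ind R (selected a b k))).
Qed.

End Permutation.
End Weights.

Section Evalue_bound.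
Context {R : realType} {n m : nat} (j : 'I_m) (gamma : R).
Local Notation N := (n + m)%N.
Local Notation p := (rshift n j).
Variables (S Lc : 'I_N -> R).
Hypothesis Lc01 : forall k, 0 <= Lc k <= 1.

Let Lc_ge0 k : 0 <= Lc k. Proof. by case/andP: (Lc01 k). Qed.

Lemma le_tgam x l : (x%:E <= tgam S Lc gamma j l)%E =
  [exists k, (FR S Lc j (S k) l <= gamma) && (x <= S k)].
Proof.
apply/idP/existsP => [|[k /andP[FRk xk]]]; last first.
  by apply: le_trans (le_bigmax_cond _ _ FRk); rewrite lee_fin.
rewrite /tgam; elim/big_rec: _ => [|k y FRk IH]; first by rewrite leeNy_eq.
by rewrite le_max => /orP[xk|/IH//]; exists k; rewrite FRk -lee_fin.
Qed.

Lemma selected_tgam q :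
  selected j gamma S Lc q = ((S q)%:E <= tgam S Lc gamma j (Lc p))%E.
Proof. by rewrite le_tgam. Qed.

Lemma Eratio_ge0 l : 0 <= l -> (0 <= Eratio S Lc gamma j l)%E.
Proof.
move=> l_ge0; rewrite /Eratio; case: ifP => // _; case: ifP => // _.
rewrite lee_fin !mulr1 divr_ge0 // addr_ge0 // sumr_ge0 // => i _.
by rewrite mulr_ge0 ?ind_ge0.
Qed.

(* At l = Lc p the denominator of Eratio is the selected mass, which vanishes
   only when Lc p does. *)
Lemma mul_Eratio_test :
  ((Lc p)%:E * Eratio S Lc gamma j (Lc p) =
   ((n + 1)%:R * weight j gamma S Lc p)%:E)%E.
Proof.
rewrite /Eratio /weight /selected_mass big_calib_or_test -selected_tgam.
under [in RHS]eq_bigr do rewrite selected_tgam.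
case: (selected _ _ _ _ p); last by rewrite mule0 /ind mulr0 mul0r mulr0.
rewrite /ind !mulr1; case: eqP => [mass0|_]; last first.
  by rewrite -EFinM mulrCA mulrA.
suff -> : Lc p = 0 by rewrite mul0e mul0r mulr0.
apply/eqP; rewrite eq_le Lc_ge0 andbT -mass0 lerDl sumr_ge0 // => i _.
by rewrite mulr_ge0 ?ind_ge0.
Qed.

Lemma Egam_ge0 : (0 <= Egam S Lc gamma j)%E.
Proof.
rewrite /Egam; case: ifP => // _.
by apply/ereal_infP => _ [l /= /andP[l_ge0 _] <-]; apply: Eratio_ge0.
Qed.

Lemma mul_Egam_le_weight :
  ((Lc p)%:E * Egam S Lc gamma j <= ((n + 1)%:R * weight j gamma S Lc p)%:E)%E.
Proof.
rewrite /Egam; case: ifP => _.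
  by rewrite mule0 lee_fin mulr_ge0 // weight_ge0.
rewrite -mul_Eratio_test lee_wpmul2l ?lee_fin //.
by apply: ereal_inf_lbound; exists (Lc p); rewrite //= in_itv /= Lc01.
Qed.

End Evalue_bound.

Lemma measurable_inv (R : realType) : measurable_fun [set: R] (@GRing.inv R).
Proof.
rewrite -(setUCr [set 0]); apply/measurable_funU => //; first exact: measurableC.
split.
  move=> _ B mB; have [B0|B0] := pselect (B 0^-1).
    by rewrite [_ `&` _](_ : _ = [set 0]) //; apply/seteqP; split=> [x []|x ->].
  by rewrite [_ `&` _](_ : _ = set0) //; apply/seteqP; split=> [x [-> /=]|].
apply: open_continuous_measurable_fun.
  exact/closed_openC/accessible_closed_set1/hausdorff_accessible/Rhausdorff.
by move=> x; rewrite inE => /eqP x0; apply: inv_continuous.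
Qed.

Section measurable_real_combinations.
Context {R : realType} {d : measure_display} {T : measurableType d}.
Implicit Types (f g : T -> R) (B : T -> bool).

Lemma measurable_ind B : measurable_fun setT B ->
  measurable_fun setT (fun v => ind R (B v)).
Proof. by move=> mB; apply: measurable_fun_ifT. Qed.

Lemma measurable_exists (I : finType) (P : T -> I -> bool) :
  (forall k, measurable_fun setT (P ^~ k)) ->
  measurable_fun setT (fun v => [exists k, P v k]).
Proof.
move=> mP; rewrite (_ : (fun v => _) = fun v => has (P v) (enum I)).
  by elim: (enum I) => [|k r IH] /=; [exact: measurable_cst|exact: measurable_or].
apply/funext => v; apply/existsP/hasP => [[k Pk]|[k _ Pk]]; last by exists k.
by exists k; rewrite ?mem_enum.
Qed.

Lemma measurable_sum_cond (I : Type) (r : seq I) (P : pred I) (F : I -> T -> R) :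
  (forall k, measurable_fun setT (F k)) ->
  measurable_fun setT (fun v => \sum_(k <- r | P k) F k v).
Proof.
move=> mF; under eq_fun do rewrite big_mkcond.
by apply: measurable_sum => k; case: (P k) => //; exact: measurable_cst.
Qed.

Lemma measurable_funV f :
  measurable_fun setT f -> measurable_fun setT (fun v => (f v)^-1).
Proof. exact: measurableT_comp (measurable_inv R). Qed.

End measurable_real_combinations.

Section measurable_weight.
Context {R : realType} {d : measure_display} {T : measurableType d}.
Context {n m : nat} (j : 'I_m) (gamma : R).
Variables (a b : T -> 'I_(n + m) -> R).
Hypothesis ma : forall k, measurable_fun setT (a ^~ k).
Hypothesis mb : forall k, measurable_fun setT (b ^~ k).

Let mind_le (f g : T -> R) : measurable_fun setT f -> measurable_fun setT g ->
  measurable_fun setT (fun v => ind R (f v <= g v)).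
Proof. by move=> mf mg; apply/measurable_ind/measurable_fun_ler. Qed.

Lemma measurable_FR (t l : T -> R) : measurable_fun setT t -> measurable_fun setT l ->
  measurable_fun setT (fun v => FR (a v) (b v) j (t v) (l v)).
Proof.
move=> mt ml; apply: measurable_funM; last exact: measurable_cst.
apply: measurable_funM; last apply: measurable_funV.
  apply: measurable_funD; first exact/measurable_funM/mind_le.
  by apply: measurable_sum_cond => k; exact/measurable_funM/mind_le.
apply: measurable_funD; first exact: measurable_cst.
by apply: measurable_sum_cond => k; exact: mind_le.
Qed.

Lemma measurable_selected q :
  measurable_fun setT (fun v => selected j gamma (a v) (b v) q).
Proof.
apply: measurable_exists => k; apply: measurable_and; last exact: measurable_fun_ler.
by apply: measurable_fun_ler; [exact: measurable_FR|exact: measurable_cst].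
Qed.

Lemma measurable_weight q :
  measurable_fun setT (fun v => weight j gamma (a v) (b v) q).
Proof.
have msel k : measurable_fun setT
    (fun v => b v k * ind R (selected j gamma (a v) (b v) k)).
  exact/measurable_funM/measurable_ind/measurable_selected.
apply: measurable_funM; [exact: msel|apply: measurable_funV].
exact: measurable_sum_cond.
Qed.

End measurable_weight.

Section tuple_boxes.
Context {d : measure_display} {T : measurableType d} {N : nat}.

Definition boxes : set (set (N.-tuple T)) :=
  [set [set v | forall i, A i (tnth v i)] |
    A in [set A : 'I_N -> set T | forall i, measurable (A i)]].

Lemma boxes_measurable : boxes `<=` measurable.
Proof.
move=> _ [A mA <-].
rewrite (_ : [set v | _] = \bigcap_(i in [set: 'I_N]) ((@tnth N T)^~ i @^-1` A i)).
  apply: fin_bigcap_measurable; first exact: finite_finset.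
  by move=> i _; rewrite -[X in measurable X]setTI; exact: measurable_tnth.
by apply/seteqP; split=> v /= Av i => [_|]; apply: Av.
Qed.

Lemma boxes_setI_closed : setI_closed boxes.
Proof.
move=> _ _ [A mA <-] [B mB <-]; exists (fun i => A i `&` B i).
  by move=> i; exact: measurableI.
by apply/seteqP; split=> v /= ABv; [split=> i; case: (ABv i)|case: ABv => Av Bv i].
Qed.

Lemma measurable_boxes : measurable = <<s boxes >>.
Proof.
apply/seteqP; split; last first.
  by apply: smallest_sub; [exact: sigma_algebra_measurable|exact: boxes_measurable].
apply: smallest_sub; first exact: smallest_sigma_algebra.
rewrite -bigcup_seq => _ [i _ [A mA <-]]; apply: sub_sigma_algebra.
exists (fun k => if k == i then A else setT); first by move=> /= k; case: ifP.
apply/seteqP; split=> v /=; first by move=> Av; split=> //; have := Av i; rewrite eqxx.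
by move=> [_ Av] k; case: eqP => [->|].
Qed.

End tuple_boxes.

Section exchangeable_sample.
Context {R : realType} {d dT : measure_display} {Omega : measurableType d}
  {T : measurableType dT} {N : nat}.
Variables (P : probability Omega R) (Z : 'I_N -> Omega -> T).
Hypothesis mZ : forall i, measurable_fun setT (Z i).
Hypothesis exchZ : exchangeable P Z.

Definition sample (sg : 'I_N -> 'I_N) (w : Omega) : N.-tuple T :=
  [tuple Z (sg i) w | i < N].

Lemma measurable_sample sg : measurable_fun setT (sample sg).
Proof.
apply/measurable_fun_tnthP => i; rewrite (_ : _ \o _ = Z (sg i)) //.
by apply/funext => w /=; rewrite tnth_mktuple.
Qed.

Lemma sample_preimage_box sg (A : 'I_N -> set T) :
  sample sg @^-1` [set v | forall i, A i (tnth v i)] =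
  [set w | forall i, A i (Z (sg i) w)].
Proof. by apply/seteqP; split=> w /= Aw i; move: (Aw i); rewrite tnth_mktuple. Qed.

(* Exchangeability fixes the law on boxes, a pi-system generating the product
   sigma-algebra, hence everywhere. *)
Lemma pushforward_sample_perm sg : bijective sg -> forall B, measurable B ->
  pushforward P (sample sg) B = pushforward P (sample id) B.
Proof.
move=> bij_sg; have boxT : boxes [set: N.-tuple T].
  by exists (fun=> setT) => //; apply/seteqP; split.
have ms := measurable_sample sg; have mi := measurable_sample id.
apply: (measure_unique boxes (fun=> setT) measurable_boxes boxes_setI_closed
  (fun=> boxT)) => //.
- exact: bigcup_const.
- by move=> _ [A mA <-]; rewrite /= /pushforward !sample_preimage_box; exact: exchZ.
- by move=> _; rewrite /= /pushforward preimage_setT probability_setT ltry.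
Qed.

Lemma integral_sample_perm sg (phi : N.-tuple T -> R) : bijective sg ->
  measurable_fun setT phi -> (forall v, 0 <= phi v) ->
  (\int[P]_w (phi (sample sg w))%:E = \int[P]_w (phi (sample id w))%:E)%E.
Proof.
move=> bij_sg mphi phi_ge0.
have mEphi : measurable_fun setT (EFin \o phi) by exact/measurable_EFinP.
have Ephi_ge0 : {in setT, forall v, (0 <= (EFin \o phi) v)%E}.
  by move=> v _; rewrite lee_fin.
have preimageE s : (\int[P]_w (phi (sample s w))%:E =
    \int[P]_(w in sample s @^-1` setT) ((EFin \o phi) \o sample s) w)%E.
  by rewrite preimage_setT.
rewrite preimageE [RHS]preimageE.
rewrite -(ge0_integral_pushforward (measurable_sample sg)) //.
rewrite -(ge0_integral_pushforward (measurable_sample id)) //.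
apply: eq_measure_integral; [exact: measurable_sample|exact: measurable_sample|].
by move=> ? ? B mB _; exact: pushforward_sample_perm.
Qed.

End exchangeable_sample.

(* [ge0_integralTE] presents the integral of a nonnegative function as a
   supremum over the simple functions below it, so no measurability is needed. *)
Lemma ge0_le_integralT {d} {T : measurableType d} {R : realType}
    (mu : {measure set T -> \bar R}) (f g : T -> \bar R) :
  (forall x, (0 <= f x)%E) -> (forall x, (f x <= g x)%E) ->
  (\int[mu]_x f x <= \int[mu]_x g x)%E.
Proof.
move=> f_ge0 fg; rewrite !ge0_integralTE // => [|x]; last exact: le_trans (fg x).
apply: ereal_sup_le => _ [h /= hf <-]; exists h => //= x.
exact: le_trans (hf x) (fg x).
Qed.

Lemma ge0_integral_sumEFin {d} {T : measurableType d} {R : realType}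
    (mu : {measure set T -> \bar R}) (I : Type) (r : seq I) (P : pred I)
    (F : I -> T -> R) :
  (forall k, measurable_fun setT (F k)) -> (forall k x, 0 <= F k x) ->
  (\int[mu]_x (\sum_(k <- r | P k) F k x)%:E =
   \sum_(k <- r | P k) \int[mu]_x (F k x)%:E)%E.
Proof.
move=> mF F_ge0; under eq_integral do rewrite -sumEFin -big_filter.
rewrite ge0_integral_sum ?big_filter // => [k|k x _].
  exact/measurable_EFinP.
by rewrite lee_fin.
Qed.

Section expected_weight.
Context {R : realType} {d dT : measure_display} {Omega : measurableType d}
  {T : measurableType dT} {n m : nat} (j : 'I_m) (gamma : R).
Variables (P : probability Omega R) (Z : 'I_(n + m) -> Omega -> T).
Hypothesis mZ : forall i, measurable_fun setT (Z i).
Hypothesis exchZ : exchangeable P Z.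
Variables (score loss : T -> R).
Hypothesis mscore : measurable_fun setT score.
Hypothesis mloss : measurable_fun setT loss.
Hypothesis loss_ge0 : forall z, 0 <= loss z.

Let weight_of (q : 'I_(n + m)) (z : 'I_(n + m) -> T) : R :=
  weight j gamma (score \o z) (loss \o z) q.

Let weight_of_sample sg q w :
  weight_of q (tnth (sample Z sg w)) = weight_of q (fun k => Z (sg k) w).
Proof. by congr weight_of; apply/funext => k; rewrite tnth_mktuple. Qed.

Let measurable_weight_of q :
  measurable_fun setT (fun v : (n + m).-tuple T => weight_of q (tnth v)).
Proof. by apply: measurable_weight => k; apply: measurableT_comp (measurable_tnth k). Qed.

Let measurable_weight_Z q : measurable_fun setT (fun w => weight_of q (Z ^~ w)).
Proof. by apply: measurable_weight => k; apply: measurableT_comp (mZ k). Qed.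

Let weight_of_ge0 q z : 0 <= weight_of q z.
Proof. by apply: weight_ge0 => k; exact: loss_ge0. Qed.

Lemma expected_weight_eq q q' : calib_or_test j q -> calib_or_test j q' ->
  (\int[P]_w (weight_of q (Z ^~ w))%:E = \int[P]_w (weight_of q' (Z ^~ w))%:E)%E.
Proof.
move=> Qq Qq'; pose sg := tperm q q'.
have sgQ k : calib_or_test j (sg k) = calib_or_test j k.
  by rewrite /sg; case: tpermP => [->|->|]; rewrite ?Qq ?Qq'.
have weight_sg w : weight_of q' (fun k => Z (sg k) w) = weight_of q (Z ^~ w).
  rewrite /weight_of (weight_perm j gamma sg sgQ (score \o Z ^~ w) (loss \o Z ^~ w)).
  by rewrite tpermR.
transitivity (\int[P]_w (weight_of q' (tnth (sample Z sg w)))%:E)%E.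
  by apply: eq_integral => w _; rewrite weight_of_sample weight_sg.
rewrite (integral_sample_perm P Z mZ exchZ sg (fun v => weight_of q' (tnth v))) //.
- by apply: eq_integral => w _; rewrite weight_of_sample.
- exact: injF_bij (@perm_inj _ sg).
Qed.

Lemma expected_test_weight_le :
  (\int[P]_w ((n + 1)%:R * weight_of (rshift n j) (Z ^~ w))%:E <= 1)%E.
Proof.
have Qp : calib_or_test j (rshift n j) by rewrite calib_or_test_rshift.
have test_mult w : (n + 1)%:R * weight_of (rshift n j) (Z ^~ w) =
    \sum_(k < n + m | calib_or_test j k) weight_of (rshift n j) (Z ^~ w).
  by rewrite big_calib_or_test sumr_const card_ord natrD mulrDl mul1r mulr_natl addrC.
under eq_integral do rewrite test_mult.
rewrite ge0_integral_sumEFin //.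
under eq_bigr => k Qk do rewrite (expected_weight_eq _ _ Qp Qk).
rewrite -ge0_integral_sumEFin //.
apply: (le_trans (ge0_le_integralT P _ (cst 1%E) _ _)).
- by move=> w; rewrite lee_fin sumr_ge0.
- by move=> w; rewrite lee_fin sum_weight_le1.
by rewrite integral_cst // mul1e probability_le1.
Qed.

End expected_weight.

Theorem theorem5p1 (R : realType) (d dX dY : measure_display)
  (Omega : measurableType d) (P : probability Omega R)
  (X : measurableType dX) (Y : measurableType dY) (n m : nat)
  (Xs : 'I_(n + m) -> Omega -> X) (Ys : 'I_(n + m) -> Omega -> Y)
  (hmeas : forall i, measurable_fun setT (fun w => (Xs i w, Ys i w)))
  (hexch : exchangeable P (fun i w => (Xs i w, Ys i w)))
  (F : Type) (f : F) (loss : F -> X -> Y -> R)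
  (hloss01 : forall x y, 0 <= loss f x y <= 1)
  (hlossm : measurable_fun setT (fun xy : X * Y => loss f xy.1 xy.2))
  (s : X -> R) (hs01 : forall x, 0 <= s x <= 1) (hsm : measurable_fun setT s)
  (gamma : R) (hgamma : 0 < gamma) (j : 'I_m) :
  let L := fun (i : 'I_(n + m)) (w : Omega) => loss f (Xs i w) (Ys i w) in
  let E := fun w => Egam (fun k => s (Xs k w)) (fun k => L k w) gamma j in
  (forall w, (0 <= E w)%E) /\
  (\int[P]_w ((L (rshift n j) w)%:E * E w) <= 1)%E.
Proof.
move=> L E; have L01 w k : 0 <= L k w <= 1 by exact: hloss01.
split=> [w|]; first exact: Egam_ge0 (L01 w).
have loss_ge0 (z : X * Y) : 0 <= loss f z.1 z.2 by case/andP: (hloss01 z.1 z.2).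
apply: le_trans (expected_test_weight_le j gamma _ _ hmeas hexch _ _
  (measurableT_comp hsm measurable_fst) hlossm loss_ge0).
apply: ge0_le_integralT => w; last exact: mul_Egam_le_weight (L01 w).
apply: mule_ge0; last exact: Egam_ge0 (L01 w).
by rewrite lee_fin; case/andP: (L01 w (rshift n j)).
Qed.
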